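(* In the reachability strategy-improvement algorithm described in the context, for all $i\ge0$ the player-1 selector $\gamma_i$ obtained at iteration $i$ is proper.
   Context: Concurrent game structure $G=(S,M,\Gamma_1,\Gamma_2,\delta)$: finite states, finite moves, nonempty move sets $\Gamma_i(s)$, $\delta(s,a_1,a_2)\in\mathrm{Distr}(S)$ (simultaneous independent moves). Selectors assign to each state a distribution on available moves; $\overline{\xi}$ is the memoryless strategy playing $\xi$ forever; $\Pr_s^{\pi_1,\pi_2}$ is the induced measure on plays; $\mathrm{Reach}(X)$: plays visiting $X$. $\mathrm{val}_1^{\pi_1}(\mathrm{Reach}(T))(s)=\inf_{\pi_2}\Pr_s^{\pi_1,\pi_2}(\mathrm{Reach}(T))$, $\mathrm{val}_1(\mathrm{Reach}(T))=\sup_{\pi_1}\mathrm{val}_1^{\pi_1}(\mathrm{Reach}(T))$. For a valuation $v:S\to[0,1]$: $\mathrm{Pre}_{\xi_1,\xi_2}(v)(s)=\sum_{a,b}\sum_tv(t)\delta(s,a,b)(t)\xi_1(s)(a)\xi_2(s)(b)$, $\mathrm{Pre}_{1:\xi_1}(v)(s)=\inf_{\xi_2}\mathrm{Pre}_{\xi_1,\xi_2}(v)(s)$, $\mathrm{Pre}_1(v)(s)=\sup_{\xi_1}\mathrm{Pre}_{1:\xi_1}(v)(s)$. Fix $T\subseteq S$, $W_2=\{s:\mathrm{val}_1(\mathrm{Reach}(T))(s)=0\}$; all states of $T\cup W_2$ are absorbing. A player-1 strategy is proper if, against every player-2 strategy, from every $s\in S\setminus(T\cup W_2)$, $T\cup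 W_2$ is reached with probability 1; a selector $\xi$ is proper if $\overline{\xi}$ is. The algorithm: $\gamma_0$ is the uniform selector on $\Gamma_1(s)$, $v_i=\mathrm{val}_1^{\overline{\gamma}_i}(\mathrm{Reach}(T))$. At iteration $i$: $I=\{s\in S\setminus(T\cup W_2):\mathrm{Pre}_1(v_i)(s)>v_i(s)\}$; $\xi_1$ is a selector with $\mathrm{Pre}_{1:\xi_1}(v_i)(s)=\mathrm{Pre}_1(v_i)(s)$ for $s\in I$; $\gamma_{i+1}(s)=\gamma_i(s)$ for $s\notin I$ and $\gamma_{i+1}(s)=\xi_1(s)$ for $s\in I$; stop when $I=\emptyset$. *)

From HB Require Import structures.
From mathcomp Require Import all_boot all_order all_algebra.
From mathcomp Require Import boolp classical_sets reals.
Set Implicit Arguments. Unset Strict Implicit. Unset Printing Implicit Defensive.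
Import Order.TTheory GRing.Theory Num.Theory.
Local Open Scope ring_scope.

Record cgame (R : realType) (S M : finType) := CGame {
  Gam1 : S -> {set M};
  Gam2 : S -> {set M};
  delta : S -> M -> M -> S -> R;
  Gam1_nonempty : forall s, Gam1 s != finset.set0;
  Gam2_nonempty : forall s, Gam2 s != finset.set0;
  delta_ge0 : forall s a b t, 0 <= delta s a b t;
  delta_sum1 : forall s a b, \sum_(t : S) delta s a b t = 1 }.

Section Game.
Variables (R : realType) (S M : finType) (G : cgame R S M).

Definition distr_on (A : {set M}) (d : M -> R) : Prop :=
  (forall a, 0 <= d a) /\ (forall a, a \notin A -> d a = 0) /\
  \sum_(a : M) d a = 1.

Definition selector1 (xi : S -> M -> R) : Prop := forall s, distr_on (Gam1 G s) (xi s).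
Definition selector2 (xi : S -> M -> R) : Prop := forall s, distr_on (Gam2 G s) (xi s).

(* strategies: history (past states h, current state s) -> distribution on moves *)
Definition strategy1 (pi : seq S -> S -> M -> R) : Prop :=
  forall h s, distr_on (Gam1 G s) (pi h s).
Definition strategy2 (pi : seq S -> S -> M -> R) : Prop :=
  forall h s, distr_on (Gam2 G s) (pi h s).

Definition memless (xi : S -> M -> R) : seq S -> S -> M -> R := fun _ s => xi s.

Fixpoint reach_within (pi1 pi2 : seq S -> S -> M -> R) (X : {set S})
    (n : nat) (h : seq S) (s : S) : R :=
  if s \in X then 1 else
  match n with
  | 0 => 0
  | n'.+1 => \sum_(a : M) \sum_(b : M) \sum_(t : S)
       pi1 h s a * pi2 h s b * delta G s a b t *
       reach_within pi1 pi2 X n' (rcons h s) t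
  end.

(* Pr_s^{pi1,pi2}(Reach X): measure of the increasing union of the events
   "X visited within n steps" *)
Definition PrReach (pi1 pi2 : seq S -> S -> M -> R) (X : {set S}) (s : S) : R :=
  sup [set reach_within pi1 pi2 X n [::] s | n in [set: nat]]%classic.

Definition val1_strat (pi1 : seq S -> S -> M -> R) (T : {set S}) (s : S) : R :=
  inf [set PrReach pi1 pi2 T s | pi2 in strategy2]%classic.

Definition val1 (T : {set S}) (s : S) : R :=
  sup [set val1_strat pi1 T s | pi1 in strategy1]%classic.

Definition W2 (T : {set S}) : {set S} := [set s | val1 T s == 0].

Definition Pre12 (xi1 xi2 : S -> M -> R) (v : S -> R) (s : S) : R :=
  \sum_(a : M) \sum_(b : M) \sum_(t : S) v t * delta G s a b t * xi1 s a * xi2 s b.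

Definition Pre1_sel (xi1 : S -> M -> R) (v : S -> R) (s : S) : R :=
  inf [set Pre12 xi1 xi2 v s | xi2 in selector2]%classic.

Definition Pre1 (v : S -> R) (s : S) : R :=
  sup [set Pre1_sel xi1 v s | xi1 in selector1]%classic.

Definition absorbing (s : S) : Prop :=
  forall a b, a \in Gam1 G s -> b \in Gam2 G s -> delta G s a b s = 1.

Definition proper_strat (T : {set S}) (pi1 : seq S -> S -> M -> R) : Prop :=
  forall pi2, strategy2 pi2 ->
  forall s, s \notin T :|: W2 T -> PrReach pi1 pi2 (T :|: W2 T) s = 1.

Definition proper_sel (T : {set S}) (xi : S -> M -> R) : Prop :=
  proper_strat T (memless xi).

Definition unif_sel (s : S) (a : M) : R :=
  if a \in Gam1 G s then (#|Gam1 G s|%:R)^-1 else 0.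

Definition vof (T : {set S}) (gam : S -> M -> R) : S -> R :=
  val1_strat (memless gam) T.

Definition improv (T : {set S}) (v : S -> R) : {set S} :=
  [set s | (s \notin T :|: W2 T) && (v s < Pre1 v s)].

(* one iteration of the strategy-improvement algorithm:
   gam' is a possible gamma_{i+1} computed from gam = gamma_i *)
Definition improve_step (T : {set S}) (gam gam' : S -> M -> R) : Prop :=
  let v := vof T gam in
  let I := improv T v in
  exists xi1, selector1 xi1 /\
    (forall s, s \in I -> Pre1_sel xi1 v s = Pre1 v s) /\
    (forall s, s \notin I -> gam' s = gam s) /\
    (forall s, s \in I -> gam' s = xi1 s).

End Game.

From HB Require Import structures.
From mathcomp Require Import all_boot all_order all_algebra.
From mathcomp Require Import boolp classical_sets reals.
From mathcomp Require Import ring lra.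
Import Order.TTheory GRing.Theory Num.Theory.
Local Open Scope ring_scope.
Set Implicit Arguments. Unset Strict Implicit. Unset Printing Implicit Defensive.

(* For a selector [gm] there is a dichotomy: either every state lies in the
   attractor of the target [X] for the moves in the support of [gm], and then
   [X] is reached within [#|S|] steps with a probability bounded away from 0,
   hence almost surely; or the complement of the attractor is a nonempty trap:
   a set disjoint from [X] in which player 2 can keep the play by a pure
   selector, whatever move of the support of [gm] player 1 chooses.
   For the uniform selector, which has full support, the states of such a trap
   have value 0, so they lie in [W2].  For [gamma_(i+1)], let [m] be the maximum
   of [v_i] on a trap [C] and [L] the states of [C] where it is attained.  Were a
   state of [L] improved, [Pre1 v_i] would be at most [m] there, as [C] is a
   trap for [gamma_(i+1)]; hence [gamma_(i+1) = gamma_i] on [L].  As [v_i] is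
   at most its one-step mean against any player-2 selector, every
   [gamma_i]-successor of [L] stays in [L].  Thus [L] is a trap for [gamma_i],
   contradicting that [gamma_i] is proper. *)

Section RealFacts.
Variable R : realType.

Lemma le_sup_of_ubound (E : set R) b y : ubound E b -> E y -> y <= sup E.
Proof. by move=> Eb; apply: ub_le_sup; exists b. Qed.

Lemma inf_le_of_lbound (E : set R) b y : lbound E b -> E y -> inf E <= y.
Proof. by move=> Eb; apply: ge_inf; exists b. Qed.

Lemma ler_sum_term (I : finType) (F : I -> R) i :
  (forall j, 0 <= F j) -> F i <= \sum_j F j.
Proof. by move=> F0; rewrite (bigD1 i) //= lerDl sumr_ge0. Qed.

Lemma bernoulli_le1 (d : R) k : 0 <= d <= 1 -> (1 - d) ^+ k * (1 + k%:R * d) <= 1.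
Proof.
case/andP=> d0 d1; elim: k => [|k IH]; first by rewrite expr0 mul0r addr0 mulr1.
have bk : 0 <= (1 - d) ^+ k by rewrite exprn_ge0 // subr_ge0.
have kd : 0 <= (k.+1%:R : R) * d ^+ 2 by rewrite mulr_ge0 ?sqr_ge0.
have -> : (1 - d) ^+ k.+1 * (1 + k.+1%:R * d) =
    (1 - d) ^+ k * (1 + k%:R * d) - (1 - d) ^+ k * (k.+1%:R * d ^+ 2).
  by rewrite exprSr -natr1; ring.
by rewrite lerBlDr (le_trans IH) // lerDl mulr_ge0.
Qed.

Lemma le_exprn_le0 (beta e : R) : 0 <= beta < 1 -> (forall k, e <= beta ^+ k) -> e <= 0.
Proof.
case/andP=> b0 b1 hk; rewrite leNgt; apply/negP => e0.
set d := 1 - beta; have d0 : 0 < d by rewrite subr_gt0.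
have d1 : d <= 1 by rewrite lerBlDr lerDl.
have ed0 : 0 < e * d by rewrite mulr_gt0.
set n := Num.Def.archi_bound (e * d)^-1.
have hn : (e * d)^-1 < n%:R by apply: archi_boundP; rewrite invr_ge0 ltW.
have : e * (1 + n%:R * d) <= 1.
  apply: le_trans (bernoulli_le1 n (_ : 0 <= d <= 1)); last by rewrite (ltW d0).
  have -> : 1 - d = beta by rewrite /d; ring.
  by rewrite ler_wpM2r // addr_ge0 // mulr_ge0 // ltW.
have : 1 < e * (n%:R * d).
  by rewrite mulrCA -ltr_pdivrMr // div1r.
rewrite mulrDr mulr1; lra.
Qed.

End RealFacts.

Section Game.
Variables (R : realType) (S M : finType) (G : cgame R S M).
Local Notation rw := (reach_within G).

Lemma distr_ge0 (A : {set M}) (d : M -> R) a : distr_on A d -> 0 <= d a.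
Proof. by case. Qed.

Lemma distr_sum1 (A : {set M}) (d : M -> R) : distr_on A d -> \sum_a d a = 1.
Proof. by case=> _ []. Qed.

Lemma distr_eq0 (A : {set M}) (d : M -> R) a : distr_on A d -> a \notin A -> d a = 0.
Proof. by case=> _ [+ _]; apply. Qed.

Lemma distr_le1 (A : {set M}) (d : M -> R) a : distr_on A d -> d a <= 1.
Proof.
by move=> hd; rewrite -(distr_sum1 hd) ler_sum_term // => b; apply: distr_ge0 hd.
Qed.

Lemma delta_le1 s a b t : delta G s a b t <= 1.
Proof. by rewrite -(delta_sum1 G s a b) ler_sum_term // => u; apply: delta_ge0. Qed.

Definition next_mean (p q : M -> R) (s : S) (f : S -> R) : R :=
  \sum_a \sum_b \sum_t p a * q b * delta G s a b t * f t.

Lemma reach_withinS pi1 pi2 (X : {set S}) n h s : s \notin X ->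
  rw pi1 pi2 X n.+1 h s =
    next_mean (pi1 h s) (pi2 h s) s (rw pi1 pi2 X n (rcons h s)).
Proof. by rewrite /= => /negbTE ->. Qed.

Lemma Pre12E xi1 xi2 v s : Pre12 G xi1 xi2 v s = next_mean (xi1 s) (xi2 s) s v.
Proof. by apply: eq_bigr => a _; apply: eq_bigr => b _; apply: eq_bigr => t _; ring. Qed.

Lemma next_meanMr p q s f c :
  next_mean p q s (fun t => f t * c) = next_mean p q s f * c.
Proof.
rewrite /next_mean !mulr_suml; apply: eq_bigr => a _; rewrite !mulr_suml.
by apply: eq_bigr => b _; rewrite mulr_suml; apply: eq_bigr => t _; rewrite mulrA.
Qed.

Lemma next_mean_eq0 p q s f :
  (forall a b t, p a != 0 -> q b != 0 -> delta G s a b t != 0 -> f t = 0) ->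
  next_mean p q s f = 0.
Proof.
move=> f0; apply: big1 => a _; apply: big1 => b _; apply: big1 => t _.
have [->|pa] := eqVneq (p a) 0; first by rewrite !mul0r.
have [->|qb] := eqVneq (q b) 0; first by rewrite mulr0 !mul0r.
have [->|dt] := eqVneq (delta G s a b t) 0; first by rewrite mulr0 mul0r.
by rewrite (f0 a b t) ?mulr0.
Qed.

Section MeanUnderDistributions.
Variables (A B : {set M}) (p q : M -> R) (s : S).
Hypotheses (hp : distr_on A p) (hq : distr_on B q).

Local Notation mean := (next_mean p q s).

Lemma next_weight_ge0 a b t : 0 <= p a * q b * delta G s a b t.
Proof. by rewrite !mulr_ge0 ?delta_ge0 ?(distr_ge0 _ hp) ?(distr_ge0 _ hq). Qed.

Lemma next_mean_cst c : mean (fun=> c) = c.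
Proof.
transitivity ((\sum_a p a) * (\sum_b q b) * c); last first.
  by rewrite (distr_sum1 hp) (distr_sum1 hq) !mul1r.
rewrite !mulr_suml; apply: eq_bigr => a _; rewrite mulr_sumr mulr_suml.
apply: eq_bigr => b _.
by rewrite -mulr_suml -mulr_sumr delta_sum1 mulr1.
Qed.

Lemma ler_next_mean f g : (forall t, f t <= g t) -> mean f <= mean g.
Proof.
move=> fg; apply: ler_sum => a _; apply: ler_sum => b _; apply: ler_sum => t _.
by rewrite ler_wpM2l ?next_weight_ge0.
Qed.

Lemma next_mean_ge0 f : (forall t, 0 <= f t) -> 0 <= mean f.
Proof. by move=> f0; rewrite -(next_mean_cst 0); apply: ler_next_mean. Qed.

Lemma next_mean_le1 f : (forall t, f t <= 1) -> mean f <= 1.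
Proof. by move=> f1; rewrite -[leRHS](next_mean_cst 1); apply: ler_next_mean. Qed.

Lemma next_meanDr f c : mean (fun t => f t + c) = mean f + c.
Proof.
rewrite -[X in _ + X]next_mean_cst -!big_split; apply: eq_bigr => a _.
rewrite -big_split; apply: eq_bigr => b _; rewrite -big_split.
by apply: eq_bigr => t _; rewrite mulrDr.
Qed.

Lemma next_meanBl c f : mean (fun t => c - f t) = c - mean f.
Proof.
rewrite -[X in X - _]next_mean_cst -!sumrB; apply: eq_bigr => a _.
rewrite -sumrB; apply: eq_bigr => b _; rewrite -sumrB.
by apply: eq_bigr => t _; rewrite mulrBr.
Qed.

Lemma next_mean_ge x f : (forall t, 0 <= f t) ->
  (forall b, b \in B -> exists a t, x <= p a * delta G s a b t * f t) ->
  x <= mean f.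
Proof.
move=> f0 hx; rewrite -[leLHS]mul1r -(distr_sum1 hq) mulr_suml.
rewrite /next_mean exchange_big; apply: ler_sum => b _.
have -> : \sum_a \sum_t p a * q b * delta G s a b t * f t =
    q b * \sum_a \sum_t p a * delta G s a b t * f t.
  rewrite mulr_sumr; apply: eq_bigr => a _; rewrite mulr_sumr.
  by apply: eq_bigr => t _; rewrite [p a * q b]mulrC -!mulrA.
have [bB|bB] := boolP (b \in B); last by rewrite (distr_eq0 hq bB) !mul0r.
rewrite ler_wpM2l ?(distr_ge0 _ hq) //.
have [a [t xle]] := hx b bB; apply: le_trans xle _.
have w0 a' t' : 0 <= p a' * delta G s a' b t' * f t'.
  by rewrite !mulr_ge0 ?delta_ge0 ?(distr_ge0 _ hp).
apply: le_trans (ler_sum_term a _) => [|a']; last exact: sumr_ge0.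
by apply: ler_sum_term => t'.
Qed.

Section BoundedOnSupport.
Variables (m : R) (f : S -> R).
Hypothesis f_le : forall a b t,
  0 < p a -> 0 < q b -> 0 < delta G s a b t -> f t <= m.

Let gap_ge0 a b t : 0 <= p a * q b * delta G s a b t * (m - f t).
Proof.
have [->|pa] := eqVneq (p a) 0; first by rewrite !mul0r.
have [->|qb] := eqVneq (q b) 0; first by rewrite mulr0 !mul0r.
have [->|dt] := eqVneq (delta G s a b t) 0; first by rewrite mulr0 mul0r.
rewrite mulr_ge0 ?next_weight_ge0 // subr_ge0; apply: (f_le (a := a) (b := b));
  by rewrite lt0r ?pa ?qb ?dt ?(distr_ge0 _ hp) ?(distr_ge0 _ hq) ?delta_ge0.
Qed.

Lemma next_mean_le_cst : mean f <= m.
Proof.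
rewrite -subr_ge0 -next_meanBl; apply: sumr_ge0 => a _.
by apply: sumr_ge0 => b _; apply: sumr_ge0 => t _.
Qed.

Lemma next_mean_eq_cst : m <= mean f ->
  forall a b t, 0 < p a -> 0 < q b -> 0 < delta G s a b t -> f t = m.
Proof.
move=> m_le a b t pa qb dt.
have gap0 : mean (fun t => m - f t) = 0.
  by apply/eqP; rewrite next_meanBl subr_eq0 eq_le m_le next_mean_le_cst.
have sum_ge0 a' : 0 <= \sum_b' \sum_t' p a' * q b' * delta G s a' b' t' * (m - f t').
  by apply: sumr_ge0 => b' _; apply: sumr_ge0.
move: (psumr_eq0P (fun a' _ => sum_ge0 a') gap0 (i := a) isT).
move=> /(psumr_eq0P (fun b' _ => sumr_ge0 _ (fun t' _ => gap_ge0 a b' t'))) /(_ b isT).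
move=> /(psumr_eq0P (fun t' _ => gap_ge0 a b t')) /(_ t isT) /eqP.
have w0 : 0 < p a * q b * delta G s a b t by rewrite !mulr_gt0.
by rewrite mulf_eq0 gt_eqF //= subr_eq0 => /eqP.
Qed.

End BoundedOnSupport.

End MeanUnderDistributions.

Lemma memless_strategy1 xi : selector1 G xi -> strategy1 G (memless xi).
Proof. by move=> hxi h; apply: hxi. Qed.

Lemma memless_strategy2 xi : selector2 G xi -> strategy2 G (memless xi).
Proof. by move=> hxi h; apply: hxi. Qed.

Lemma reach_within_in pi1 pi2 (X : {set S}) n h s :
  s \in X -> rw pi1 pi2 X n h s = 1.
Proof. by case: n => [|n] /= ->. Qed.

Section Reachability.
Variables (pi1 pi2 : seq S -> S -> M -> R) (X : {set S}).
Hypotheses (h1 : strategy1 G pi1) (h2 : strategy2 G pi2).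

Lemma reach_within_ge0 n h s : 0 <= rw pi1 pi2 X n h s.
Proof.
elim: n h s => [|n IH] h s; have [sX|sX] := boolP (s \in X);
  try by rewrite reach_within_in.
  by rewrite /= (negbTE sX).
by rewrite reach_withinS //; apply: (next_mean_ge0 _ (h1 h s) (h2 h s)).
Qed.

Lemma reach_within_le1 n h s : rw pi1 pi2 X n h s <= 1.
Proof.
elim: n h s => [|n IH] h s; have [sX|sX] := boolP (s \in X);
  try by rewrite reach_within_in.
  by rewrite /= (negbTE sX).
by rewrite reach_withinS //; apply: (next_mean_le1 _ (h1 h s) (h2 h s)).
Qed.

Lemma reach_within_le_PrReach n s : rw pi1 pi2 X n [::] s <= PrReach G pi1 pi2 X s.
Proof.
apply: (@le_sup_of_ubound _ _ 1) => [_ [k _ <-]|]; last by exists n.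
exact: reach_within_le1.
Qed.

Lemma PrReach_le1 s : PrReach G pi1 pi2 X s <= 1.
Proof.
apply: ge_sup => [|_ [k _ <-]]; last exact: reach_within_le1.
by exists (rw pi1 pi2 X 0 [::] s), 0%N.
Qed.

Lemma PrReach_ge0 s : 0 <= PrReach G pi1 pi2 X s.
Proof. exact: le_trans (reach_within_ge0 0 _ _) (reach_within_le_PrReach 0 s). Qed.

Lemma reach_within_amplify m g :
  0 <= g -> (forall h s, 1 - rw pi1 pi2 X m h s <= g) ->
  forall N h s, 1 - rw pi1 pi2 X (N + m) h s <= (1 - rw pi1 pi2 X N h s) * g.
Proof.
move=> g0 hg; elim=> [|N IH] h s; have [sX|sX] := boolP (s \in X);
  try by rewrite !reach_within_in // subrr mul0r.
  by rewrite /= (negbTE sX) subr0 mul1r.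
rewrite addSn !reach_withinS // -!(next_meanBl _ (h1 h s) (h2 h s)) -next_meanMr.
exact: (ler_next_mean _ (h1 h s) (h2 h s)).
Qed.

Lemma reach_within_geometric N beta : 0 <= beta ->
  (forall h s, 1 - rw pi1 pi2 X N h s <= beta) ->
  forall k h s, 1 - rw pi1 pi2 X (k * N) h s <= beta ^+ k.
Proof.
move=> b0 hb; elim=> [|k IH] h s.
  by rewrite expr0 lerBlDr lerDl reach_within_ge0.
rewrite mulSn addnC exprSr; apply: le_trans (reach_within_amplify b0 hb _ h s) _.
by rewrite ler_wpM2r.
Qed.

Lemma PrReach_eq1_of_uniform_lb N c : 0 < c ->
  (forall h s, c <= rw pi1 pi2 X N h s) -> forall s, PrReach G pi1 pi2 X s = 1.
Proof.
move=> c0 hc s; apply/le_anti; rewrite PrReach_le1 /=.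
have c1 : c <= 1 := le_trans (hc [::] s) (reach_within_le1 _ _ _).
have hb h t : 1 - rw pi1 pi2 X N h t <= 1 - c by rewrite lerB.
rewrite -subr_le0; apply: (@le_exprn_le0 _ (1 - c)) => [|k].
  by rewrite subr_ge0 c1 ltrBlDr ltrDl.
apply: le_trans (reach_within_geometric _ hb k [::] s).
  by rewrite lerB ?reach_within_le_PrReach.
by rewrite subr_ge0.
Qed.

End Reachability.

Definition pure_sel (bs : S -> M) : S -> M -> R := fun s b => (b == bs s)%:R.

Lemma pure_selector2 bs : (forall s, bs s \in Gam2 G s) -> selector2 G (pure_sel bs).
Proof.
move=> hbs s; split; first by move=> b; rewrite ler0n.
split; first by move=> b; apply: contraNeq; rewrite pnatr_eq0 eqb0 negbK => /eqP->.
by rewrite (bigD1 (bs s)) //= /pure_sel eqxx big1 ?addr0 // => b /negbTE->.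
Qed.

Lemma pure_sel_neq0 bs s b : pure_sel bs s b != 0 -> b = bs s.
Proof. by rewrite pnatr_eq0 eqb0 negbK => /eqP. Qed.

Lemma exists_strategy2 : exists pi2, strategy2 G pi2.
Proof.
have /choice[bs hbs] : forall s, exists b, b \in Gam2 G s.
  by move=> s; apply/set0Pn/Gam2_nonempty.
by exists (memless (pure_sel bs)); apply/memless_strategy2/pure_selector2.
Qed.

Lemma val1_strat_le_PrReach pi1 pi2 X s : strategy1 G pi1 -> strategy2 G pi2 ->
  val1_strat G pi1 X s <= PrReach G pi1 pi2 X s.
Proof.
move=> h1 h2; apply: (@inf_le_of_lbound _ _ 0) => [_ [pi2' h2' <-]|].
  exact: PrReach_ge0.
by exists pi2.
Qed.

Lemma val1_strat_ge0 pi1 X s : strategy1 G pi1 -> 0 <= val1_strat G pi1 X s.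
Proof.
move=> h1; have [pi2 h2] := exists_strategy2.
apply: lb_le_inf => [|_ [pi2' h2' <-]]; last exact: PrReach_ge0.
by exists (PrReach G pi1 pi2 X s), pi2.
Qed.

Lemma val1_strat_le1 pi1 X s : strategy1 G pi1 -> val1_strat G pi1 X s <= 1.
Proof.
move=> h1; have [pi2 h2] := exists_strategy2.
exact: le_trans (val1_strat_le_PrReach X s h1 h2) (PrReach_le1 X h1 h2 s).
Qed.

Definition trap (gm : S -> M -> R) (bs : S -> M) (C : {set S}) : Prop :=
  forall s a t, s \in C -> 0 < gm s a -> 0 < delta G s a (bs s) t -> t \in C.

Section Trap.
Variables (gm : S -> M -> R) (bs : S -> M) (C X : {set S}).
Variable pi1 : seq S -> S -> M -> R.
Hypotheses (trapC : trap gm bs C) (CX : [disjoint C & X])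
  (pi1_supp : forall h s a, s \in C -> pi1 h s a != 0 -> 0 < gm s a).

Lemma reach_within_trap_eq0 n h s :
  s \in C -> rw pi1 (memless (pure_sel bs)) X n h s = 0.
Proof.
elim: n h s => [|n IH] h s sC; have sX := disjointFr CX sC; first by rewrite /= sX.
rewrite reach_withinS ?sX //; apply: next_mean_eq0 => a b t pa /pure_sel_neq0 -> dt.
apply: IH; apply: trapC (pi1_supp _ pa) _ => //.
by rewrite lt0r dt delta_ge0.
Qed.

Lemma PrReach_trap_eq0 s : s \in C -> PrReach G pi1 (memless (pure_sel bs)) X s = 0.
Proof.
move=> sC; rewrite /PrReach.
rewrite (_ : [set _ | n in _] = [set 0])%classic ?sup1 //.
apply/seteqP; split => [_ [n _ <-]|_ ->]; first by rewrite /= reach_within_trap_eq0.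
by exists 0%N; rewrite ?reach_within_trap_eq0.
Qed.

End Trap.

Definition attr_step (gm : S -> M -> R) (X A : {set S}) : {set S} :=
  X :|: [set s | [forall b in Gam2 G s, [exists a, [exists t in A,
           0 < gm s a * delta G s a b t]]]].

Lemma attr_step_mono gm X : {homo attr_step gm X : A B / A \subset B}.
Proof.
move=> A B sAB; apply/fintype.subsetP => s.
rewrite !inE => /orP[->//|/forall_inP hA]; apply/orP; right.
apply/forall_inP => b /hA /existsP[a /exists_inP[t tA pos]].
apply/existsP; exists a; apply/exists_inP; exists t => //.
exact: (fintype.subsetP sAB).
Qed.

Definition step_weight (gm : S -> M -> R) (x : S * M * M * S) : R :=
  let: (s, a, b, t) := x in gm s a * delta G s a b t.

(* Each positive one-step weight is at most 1, so their product is a positive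
   lower bound for all of them. *)
Definition step_weight_lb (gm : S -> M -> R) : R :=
  \prod_(x | 0 < step_weight gm x) step_weight gm x.

Section Attractor.
Variables (gm : S -> M -> R) (X : {set S}).
Hypothesis hgm : selector1 G gm.

Let step_weight_le1 x : step_weight gm x <= 1.
Proof.
case: x => [[[s a] b] t] /=.
by rewrite mulr_ile1 ?delta_ge0 ?delta_le1 ?(distr_ge0 _ (hgm s)) ?(distr_le1 _ (hgm s)).
Qed.

Lemma step_weight_lb_gt0 : 0 < step_weight_lb gm.
Proof. exact: prodr_gt0. Qed.

Lemma step_weight_lb_le1 : step_weight_lb gm <= 1.
Proof. by apply: prodr_ile1 => x /ltW ->; rewrite step_weight_le1. Qed.

Lemma step_weight_lb_le s a b t : 0 < gm s a * delta G s a b t ->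
  step_weight_lb gm <= gm s a * delta G s a b t.
Proof.
move=> pos; rewrite /step_weight_lb (bigD1 (s, a, b, t)) //=.
apply: ler_piMr; first exact: ltW.
by apply: prodr_ile1 => x /andP[/ltW -> _]; rewrite step_weight_le1.
Qed.

Lemma attr_iter_reach_lb pi2 k h s : strategy2 G pi2 ->
  s \in iter k (attr_step gm X) finset.set0 ->
  step_weight_lb gm ^+ k <= rw (memless gm) pi2 X k h s.
Proof.
move=> h2; set c := step_weight_lb gm.
have c0 : 0 < c := step_weight_lb_gt0.
have h1 := memless_strategy1 hgm.
elim: k h s => [|k IH] h s; first by rewrite inE.
rewrite iterS !inE; have [sX _|sX] := boolP (s \in X).
  rewrite reach_within_in //.
  by apply: exprn_ile1; [exact: ltW | exact: step_weight_lb_le1].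
move=> /orP[//|/forall_inP hs].
rewrite reach_withinS // /memless.
apply: (next_mean_ge (hgm s) (h2 h s)) => [t|b bG].
  exact: reach_within_ge0.
have /existsP[a /exists_inP[t tA pos]] := hs b bG.
exists a, t; rewrite exprS; apply: ler_pM.
- exact: ltW.
- exact: exprn_ge0 (ltW c0).
- exact: step_weight_lb_le.
- exact: IH.
Qed.

Local Notation attractor := (fixset (attr_step gm X)).

Lemma attractor_full_PrReach_eq1 pi2 :
  strategy2 G pi2 -> [set: S] \subset attractor ->
  forall s, PrReach G (memless gm) pi2 X s = 1.
Proof.
move=> h2 full; have h1 := memless_strategy1 hgm.
apply: (PrReach_eq1_of_uniform_lb h1 h2 (exprn_gt0 #|S| step_weight_lb_gt0)) => h t.
by apply: attr_iter_reach_lb h2 _; apply: (fintype.subsetP full).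
Qed.

Lemma attractor_compl_trap :
  exists2 bs, forall s, bs s \in Gam2 G s & trap gm bs (~: attractor).
Proof.
have fixA : attr_step gm X attractor = attractor := fixsetK (@attr_step_mono gm X).
have hb s : exists b, b \in Gam2 G s /\ (s \notin attractor ->
    forall a t, 0 < gm s a -> 0 < delta G s a b t -> t \notin attractor).
  have [sA|sA] := boolP (s \in attractor).
    by have /set0Pn[b bG] := Gam2_nonempty G s; exists b.
  move: (sA); rewrite -{1}fixA !inE negb_or => /andP[_ /forall_inPn[b bG noa]].
  exists b; split => // _ a t ga dt; apply: contra noa => tA.
  by apply/existsP; exists a; apply/exists_inP; exists t; rewrite ?mulr_gt0.
have /choice[bs hbs] := hb; exists bs => [s|s a t]; first by case: (hbs s).
by rewrite !inE => sA; apply: (proj2 (hbs s) sA).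
Qed.

Lemma PrReach_eq1_or_trap :
  (forall pi2, strategy2 G pi2 -> forall s, PrReach G (memless gm) pi2 X s = 1) \/
  exists bs C, [/\ forall s, bs s \in Gam2 G s, trap gm bs C,
                   C != finset.set0 & [disjoint C & X]].
Proof.
have [full|] := boolP ([set: S] \subset attractor).
  by left => pi2 h2; apply: attractor_full_PrReach_eq1.
case/fintype.subsetPn => s0 _ s0A; right.
have [bs hbs trapC] := attractor_compl_trap; exists bs, (~: attractor); split => //.
  by apply/set0Pn; exists s0; rewrite inE.
rewrite disjoint_sym finset.disjoints_subset finset.setCK.
by rewrite -(fixsetK (@attr_step_mono gm X)) finset.subsetUl.
Qed.

End Attractor.

(* Player 2 plays [q] in the first round and then, from the state [t] reached,
   the strategy [P t]; the history [x :: h] of the combined play corresponds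
   to the history [h] of the play that started at [t = head y h]. *)
Definition first_then (q : S -> M -> R) (P : S -> seq S -> S -> M -> R) :
    seq S -> S -> M -> R :=
  fun h y => if h is _ :: h' then P (head y h') h' y else q y.

Lemma first_then_strategy2 q P : selector2 G q -> (forall t, strategy2 G (P t)) ->
  strategy2 G (first_then q P).
Proof. by move=> hq hP [|x h] y /=; [apply: hq | apply: hP]. Qed.

Lemma reach_within_first_then gm q P X n x h y :
  rw (memless gm) (first_then q P) X n (x :: h) y =
    rw (memless gm) (P (head y h)) X n h y.
Proof.
elim: n h y => [|n IH] h y //=; case: ifP => // _.
apply: eq_bigr => a _; apply: eq_bigr => b _; apply: eq_bigr => t _.
by rewrite IH; case: h.
Qed.

Lemma val1_strat_le_next_mean gm xi2 (X : {set S}) s :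
  selector1 G gm -> selector2 G xi2 -> s \notin X ->
  val1_strat G (memless gm) X s <=
    next_mean (gm s) (xi2 s) s (val1_strat G (memless gm) X).
Proof.
move=> hgm hxi2 sX; set v := val1_strat G (memless gm) X.
have h1 := memless_strategy1 hgm.
have v0 t : 0 <= v t := val1_strat_ge0 X t h1.
apply/ler_addgt0Pr => e e0.
have near_opt t :
    exists pi2, strategy2 G pi2 /\ PrReach G (memless gm) pi2 X t < v t + e.
  have hinf : has_inf [set PrReach G (memless gm) pi2 X t | pi2 in strategy2 G]%classic.
    split; last by exists 0 => _ [pi2 h2 <-]; apply: PrReach_ge0.
    have [pi2 h2] := exists_strategy2.
    by exists (PrReach G (memless gm) pi2 X t), pi2.
  by have [_ [pi2 h2 <-] lt] := inf_adherent e0 hinf; exists pi2.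
have /choice[P hP] := near_opt.
have h2 := first_then_strategy2 hxi2 (fun t => proj1 (hP t)).
apply: le_trans (val1_strat_le_PrReach X s h1 h2) _.
apply: ge_sup => [|_ [[|n] _ <-]].
- by exists (rw (memless gm) (first_then xi2 P) X 0 [::] s), 0%N.
- by rewrite /= (negbTE sX) addr_ge0 ?(ltW e0) ?(next_mean_ge0 _ (hgm s) (hxi2 s) v0).
rewrite reach_withinS // -(next_meanDr _ (hgm s) (hxi2 s)).
apply: (ler_next_mean _ (hgm s) (hxi2 s)) => t; rewrite reach_within_first_then.
exact: le_trans (reach_within_le_PrReach _ h1 (proj1 (hP t)) _ _) (ltW (proj2 (hP t))).
Qed.

Lemma Pre1_sel_le_Pre12 xi1 xi2 v s : selector1 G xi1 -> selector2 G xi2 ->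
  (forall t, 0 <= v t) -> Pre1_sel G xi1 v s <= Pre12 G xi1 xi2 v s.
Proof.
move=> hxi1 hxi2 v0; apply: (@inf_le_of_lbound _ _ 0) => [_ [xi h <-]|].
  by rewrite Pre12E (next_mean_ge0 _ (hxi1 s) (h s)).
by exists xi2.
Qed.

Lemma unif_selector1 : selector1 G (unif_sel G).
Proof.
move=> s; rewrite /unif_sel; split; [|split].
- by move=> a; case: ifP; rewrite ?invr_ge0 ?ler0n.
- by move=> a /negbTE ->.
rewrite -big_mkcond /= sumr_const -(mulr_natr (#|Gam1 G s|%:R)^-1) mulVf //.
by rewrite pnatr_eq0 -lt0n finset.card_gt0 Gam1_nonempty.
Qed.

Lemma unif_sel_gt0 s a : a \in Gam1 G s -> 0 < unif_sel G s a.
Proof.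
by move=> aG; rewrite /unif_sel aG invr_gt0 ltr0n finset.card_gt0 Gam1_nonempty.
Qed.

Lemma unif_trap_subset_W2 (T : {set S}) bs C : (forall s, bs s \in Gam2 G s) ->
  trap (unif_sel G) bs C -> [disjoint C & T] -> C \subset W2 G T.
Proof.
move=> hbs trapC CT; apply/fintype.subsetP => s sC; rewrite inE; apply/eqP/le_anti.
have hu := memless_strategy1 unif_selector1.
apply/andP; split; last first.
  apply: le_trans (val1_strat_ge0 T s hu) _.
  apply: (@le_sup_of_ubound _ _ 1) => [_ [pi1 h1 <-]|]; first exact: val1_strat_le1.
  by exists (memless (unif_sel G)).
apply: ge_sup => [|_ [pi1 h1 <-]].
  by exists (val1_strat G (memless (unif_sel G)) T s), (memless (unif_sel G)).
have h2 := memless_strategy2 (pure_selector2 hbs).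
rewrite -(PrReach_trap_eq0 (pi1 := pi1) trapC CT _ sC) ?val1_strat_le_PrReach //.
move=> h t a _ pa.
apply: unif_sel_gt0; apply: contraNT pa => aG.
by rewrite (distr_eq0 (h1 h t) aG).
Qed.

Lemma unif_sel_proper T : proper_sel G T (unif_sel G).
Proof.
have [reach1|[bs [C [hbs trapC /set0Pn[s sC] CX]]]] :=
  PrReach_eq1_or_trap (T :|: W2 G T) unif_selector1.
  by move=> pi2 h2 s _; apply: reach1.
have CT : [disjoint C & T] := disjointWr (finset.subsetUl _ _) CX.
have sW2 := fintype.subsetP (unif_trap_subset_W2 hbs trapC CT) s sC.
by have := disjointFr CX sC; rewrite inE sW2 orbT.
Qed.

Section ImprovementStep.
Variables (T : {set S}) (gam gam' : S -> M -> R).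
Hypotheses (hgam : selector1 G gam) (step : improve_step G T gam gam').

Local Notation X := (T :|: W2 G T).
Local Notation v := (vof G T gam).

Lemma improve_step_selector1 : selector1 G gam'.
Proof.
have [xi1 [hxi1 [_ [out in_]]]] := step.
by move=> s; have [sI|sI] := boolP (s \in improv G T v); [rewrite in_ | rewrite out].
Qed.

Section MaximalLayer.
Variables (bs : S -> M) (C : {set S}) (m : R).
Hypotheses (hbs : forall s, bs s \in Gam2 G s) (trapC : trap gam' bs C)
  (CX : [disjoint C & X]) (v_le : forall s, s \in C -> v s <= m).

Let v0 t : 0 <= v t.
Proof. exact/val1_strat_ge0/memless_strategy1. Qed.

Let le_on_support s : s \in C -> forall a b t,
  0 < gam' s a -> 0 < pure_sel bs s b -> 0 < delta G s a b t -> v t <= m.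
Proof.
move=> sC a b t ga /lt0r_neq0 /pure_sel_neq0 -> dt.
exact/v_le/(trapC sC ga dt).
Qed.

Lemma max_layer_not_improvable s : s \in C -> v s = m -> s \notin improv G T v.
Proof.
move=> sC vs; apply/negP => sI; move: (sI); rewrite inE => /andP[_].
have [xi1 [hxi1 [opt [_ in_]]]] := step.
rewrite -(opt _ sI) ltNge; apply/negP/negPn.
apply: le_trans (Pre1_sel_le_Pre12 s hxi1 (pure_selector2 hbs) v0) _.
rewrite Pre12E -(in_ _ sI) vs.
exact: (next_mean_le_cst (improve_step_selector1 s) (pure_selector2 hbs s)
          (le_on_support sC)).
Qed.

Lemma max_layer_trap : trap gam bs [set s in C | v s == m].
Proof.
move=> s a t; rewrite !inE => /andP[sC /eqP vs] ga dt.
have [xi1 [_ [_ [out _]]]] := step.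
have gs : gam' s = gam s := out _ (max_layer_not_improvable sC vs).
have sT : s \notin T by apply: contraFN (disjointFr CX sC); rewrite inE => ->.
have le_supp := le_on_support sC; rewrite gs in le_supp.
have dev : m <= next_mean (gam s) (pure_sel bs s) s v.
  by rewrite -vs; apply: val1_strat_le_next_mean (pure_selector2 hbs) sT.
have tC : t \in C by apply: (trapC sC _ dt); rewrite gs.
have bs_pos : 0 < pure_sel bs s (bs s) by rewrite /pure_sel eqxx ltr01.
have vt := next_mean_eq_cst (hgam s) (pure_selector2 hbs s) le_supp dev ga bs_pos dt.
by rewrite tC vt eqxx.
Qed.

End MaximalLayer.

Lemma improve_step_proper : proper_sel G T gam -> proper_sel G T gam'.
Proof.
move=> proper.
have [reach1|[bs [C [hbs trapC /set0Pn[s0 s0C] CX]]]] :=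
  PrReach_eq1_or_trap X improve_step_selector1.
  by move=> pi2 h2 s _; apply: reach1.
pose s1 := [arg max_(s > s0 in C) v s]%O.
have [s1C s1max] : s1 \in C /\ forall s, s \in C -> v s <= v s1.
  by rewrite /s1; case: arg_maxP => //= s sC smax; split => // s' /smax.
have layerX : [disjoint [set s in C | v s == v s1] & X].
  by apply: disjointWl CX; apply/fintype.subsetP => s; rewrite inE => /andP[].
have s1L : s1 \in [set s in C | v s == v s1] by rewrite inE s1C eqxx.
have h2 := memless_strategy2 (pure_selector2 hbs).
have := proper _ h2 s1 (negbT (disjointFr CX s1C)).
rewrite (PrReach_trap_eq0 (max_layer_trap hbs trapC CX s1max) layerX _ s1L).
  by move=> /eqP; rewrite eq_sym oner_eq0.
by move=> h s a _ ga; rewrite lt0r ga (distr_ge0 _ (hgam s)).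
Qed.

End ImprovementStep.

End Game.

Theorem lemma7 (R : realType) (S M : finType) (G : cgame R S M) (T : {set S})
  (absT : forall s, s \in T :|: W2 G T -> absorbing G s)
  (gam : nat -> S -> M -> R)
  (gam0 : gam 0%N = unif_sel G)
  (gamS : forall i, improve_step G T (gam i) (gam i.+1)) :
  forall i, proper_sel G T (gam i).
Proof.
have sel i : selector1 G (gam i).
  elim: i => [|i IH]; first by rewrite gam0; apply: unif_selector1.
  exact: improve_step_selector1 IH (gamS i).
elim=> [|i IH]; first by rewrite gam0; apply: unif_sel_proper.
exact: improve_step_proper (sel i) (gamS i) IH.
Qed.
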